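(* Let $(U,\mathrm{dist})$ be a metric space, $\Lambda\in\mathbb{R}_{>0}\cup\{\infty\}$, $f:U\to\mathbb{R}$ a $\Lambda$-locally Lipschitz function, and $g$ a smooth growth function on $U$. Then the function $B^*:U\to\mathbb{R}_{\ge0}$, $B^*(x)=\sup_{z\in U}\frac{\mathrm{L}_{f,\Lambda}(z)}{g(x,z)}$, is a $g$-smooth upper bound on the pointwise Lipschitz constant $\mathrm{L}_{f,\Lambda}$, i.e. (1) $B^*(x)\ge\mathrm{L}_{f,\Lambda}(x)$ for all $x\in U$, and (2) $B^*(x)\le g(x,x')\,B^*(x')$ for all $x,x'\in U$.
   Context: $f$ is $\Lambda$-locally Lipschitz if there is $K\ge0$ with $|f(x)-f(x')|\le K\,\mathrm{dist}(x,x')$ whenever $\mathrm{dist}(x,x')\le\Lambda$. For $x\in U$, $\mathrm{L}_{f,\Lambda}(x)$ is the infimum of all $K$ such that $|f(x)-f(x')|\le K\,\mathrm{dist}(x,x')$ for all $x'\in U$ with $\mathrm{dist}(x,x')\le\Lambda$. A smooth growth function is $g:U\times U\to\mathbb{R}_{>0}$ of the form $g(x,x')=g_0(\mathrm{dist}(x,x'))$, where $g_0:\mathbb{R}_{\ge0}\to\mathbb{R}_{\ge1}$ is monotonically increasing, $g_0(0)=1$, and $g_0(r_1+r_2)\le g_0(r_1)g_0(r_2)$ for all $r_1,r_2\ge0$. *)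

From HB Require Import structures.
From mathcomp Require Import all_boot all_order all_algebra.
From mathcomp Require Import boolp classical_sets reals constructive_ereal ereal.
Set Implicit Arguments. Unset Strict Implicit. Unset Printing Implicit Defensive.
Import Order.TTheory GRing.Theory Num.Theory.
Local Open Scope classical_set_scope.
Local Open Scope ring_scope.

Section Defs.
Context {R : realType} {U : Type}.

Definition is_metric (dist : U -> U -> R) : Prop :=
  (forall x y, 0 <= dist x y) /\
  (forall x y, dist x y = 0 <-> x = y) /\
  (forall x y, dist x y = dist y x) /\
  (forall x y z, dist x z <= dist x y + dist y z).

(* Lambda : \bar R, Lambda = +oo encodes Lambda = infinity. *)
Definition within_Lambda (dist : U -> U -> R) (Lambda : \bar R) (x x' : U) : Prop :=
  ((dist x x')%:E <= Lambda)%E.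

Definition locally_lipschitz (dist : U -> U -> R) (Lambda : \bar R) (f : U -> R) : Prop :=
  exists K : R, 0 <= K /\
    forall x x', within_Lambda dist Lambda x x' -> `|f x - f x'| <= K * dist x x'.

Definition pointwise_lip (dist : U -> U -> R) (Lambda : \bar R) (f : U -> R) (x : U) : R :=
  inf [set K : R | 0 <= K /\
        forall x', within_Lambda dist Lambda x x' -> `|f x - f x'| <= K * dist x x'].

(* g0 generating a smooth growth function g(x,x') = g0 (dist x x') *)
Definition smooth_growth_profile (g0 : R -> R) : Prop :=
  (forall r1 r2, 0 <= r1 -> r1 <= r2 -> g0 r1 <= g0 r2) /\
  (forall r, 0 <= r -> 1 <= g0 r) /\
  g0 0 = 1 /\
  (forall r1 r2, 0 <= r1 -> 0 <= r2 -> g0 (r1 + r2) <= g0 r1 * g0 r2).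

Definition growth_fun (dist : U -> U -> R) (g0 : R -> R) (x x' : U) : R :=
  g0 (dist x x').

Definition Bstar (dist : U -> U -> R) (Lambda : \bar R) (f : U -> R) (g0 : R -> R) (x : U) : R :=
  sup (range (fun z => pointwise_lip dist Lambda f z / growth_fun dist g0 x z)).

End Defs.

From HB Require Import structures.
From mathcomp Require Import all_boot all_order all_algebra.
From mathcomp Require Import boolp classical_sets reals constructive_ereal ereal.
Set Implicit Arguments. Unset Strict Implicit.
Import Order.TTheory GRing.Theory Num.Theory.
Local Open Scope ring_scope.

(* B* is the weighted supremum x |-> sup_z h z / G x z with h = L_{f,Lambda}
   and G = g.  A uniform Lipschitz constant K gives 0 <= h <= K, and G >= 1, so
   the supremum is finite.  The term z = x, where G x x = 1, gives h <= B*; the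
   submultiplicativity G x' z <= G x x' * G x z, from the triangle inequality
   and g0 (r1 + r2) <= g0 r1 * g0 r2, gives B* x <= G x x' * B* x'. *)

Section WeightedSup.
Variables (R : realType) (U : Type) (h : U -> R) (G : U -> U -> R) (M : R).
Hypothesis h_ge0 : forall z, 0 <= h z.
Hypothesis h_le : forall z, h z <= M.
Hypothesis G_ge1 : forall x z, 1 <= G x z.
Hypothesis G_refl : forall x, G x x = 1.
Hypothesis G_submul : forall x x' z, G x' z <= G x x' * G x z.

Definition weighted_sup (x : U) : R := sup (range (fun z => h z / G x z)).

Let G_gt0 x z : 0 < G x z.
Proof. exact: lt_le_trans ltr01 (G_ge1 x z). Qed.

Lemma weighted_sup_ub x z : h z / G x z <= weighted_sup x.
Proof.
apply: ub_le_sup; last by exists z.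
exists M => _ [y _ <-]; apply: le_trans (h_le y).
by rewrite ler_pdivrMr ?G_gt0 // ler_peMr.
Qed.

Lemma le_weighted_sup x : h x <= weighted_sup x.
Proof. by have := weighted_sup_ub x x; rewrite G_refl divr1. Qed.

Lemma weighted_sup_le_mul x x' : weighted_sup x <= G x x' * weighted_sup x'.
Proof.
apply: ge_sup; first by exists (h x / G x x), x.
move=> _ [z _ <-]; apply: le_trans (ler_wpM2l (ltW (G_gt0 x x')) (weighted_sup_ub x' z)).
rewrite mulrA ler_pdivrMr ?G_gt0 // mulrAC ler_pdivlMr ?G_gt0 //.
by rewrite mulrAC mulrC ler_wpM2r.
Qed.

End WeightedSup.

Section PointwiseLip.
Variables (R : realType) (U : Type) (dist : U -> U -> R) (Lambda : \bar R) (f : U -> R).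
Variable K : R.
Hypothesis K_ge0 : 0 <= K.
Hypothesis K_lip : forall x x', within_Lambda dist Lambda x x' -> `|f x - f x'| <= K * dist x x'.

Lemma pointwise_lip_ge0 x : 0 <= pointwise_lip dist Lambda f x.
Proof. by apply: lb_le_inf => [|y []//]; exists K; split=> // x' /K_lip. Qed.

Lemma pointwise_lip_le x : pointwise_lip dist Lambda f x <= K.
Proof. by apply: ge_inf; [exists 0 => y [] | split=> // x' /K_lip]. Qed.

End PointwiseLip.

Section GrowthFun.
Variables (R : realType) (U : Type) (dist : U -> U -> R) (g0 : R -> R).
Hypotheses (dist_metric : is_metric dist) (g0_growth : smooth_growth_profile g0).

Lemma growth_fun_ge1 x z : 1 <= growth_fun dist g0 x z.
Proof. by case: dist_metric g0_growth => d0 _ [_ [g1 _]]; apply: g1. Qed.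

Lemma growth_fun_refl x : growth_fun dist g0 x x = 1.
Proof.
by case: dist_metric g0_growth => _ [dE _] [_ [_ [gz _]]]; rewrite /growth_fun (proj2 (dE x x)).
Qed.

Lemma growth_fun_submul x x' z :
  growth_fun dist g0 x' z <= growth_fun dist g0 x x' * growth_fun dist g0 x z.
Proof.
case: dist_metric g0_growth => d0 [_ [dC dT]] [gmon [_ [_ gmul]]].
apply: le_trans (gmul _ _ (d0 _ _) (d0 _ _)); apply: gmon => //.
by rewrite (dC x x'); apply: dT.
Qed.

End GrowthFun.

Theorem mainTheorem2 (R : realType) (U : Type) (dist : U -> U -> R)
  (Lambda : \bar R) (f : U -> R) (g0 : R -> R) :
  is_metric dist ->
  (0 < Lambda)%E ->
  locally_lipschitz dist Lambda f ->
  smooth_growth_profile g0 ->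
  (forall x : U, pointwise_lip dist Lambda f x <= Bstar dist Lambda f g0 x) /\
  (forall x x' : U, Bstar dist Lambda f g0 x <=
      growth_fun dist g0 x x' * Bstar dist Lambda f g0 x').
Proof.
move=> dist_metric _ [K [K_ge0 K_lip]] g0_growth.
have L_ge0 := pointwise_lip_ge0 K_ge0 K_lip.
have L_le := pointwise_lip_le K_ge0 K_lip.
split=> [x|x x'].
- exact: (le_weighted_sup L_ge0 L_le (growth_fun_ge1 dist_metric g0_growth)
                          (growth_fun_refl dist_metric g0_growth)).
- exact: (weighted_sup_le_mul L_ge0 L_le (growth_fun_ge1 dist_metric g0_growth)
                              (growth_fun_submul dist_metric g0_growth)).
Qed.
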